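(* Let $F$, $H$, $X$, $\Omega$, $Q$ and the sequences generated by the IneIREG method be as described in the context. Suppose: $(\eta_k)$ is nonincreasing; $\alpha_0\in[0,1]$ and $(\alpha_k/\eta_k)$ is nonincreasing; $\lambda_k\in[\underline\lambda,\overline\lambda]$ for all $k\ge0$ with $0<\underline\lambda\le\overline\lambda\le1/(L_F+\eta_0L_H)$; and $\sum_{k=0}^\infty\delta_k\eta_k^{-1}<+\infty$. For $k\ge1$ let $\Lambda_k=\sum_{j=0}^{k-1}\lambda_j$ and $\overline y_k=\Lambda_k^{-1}\sum_{j=0}^{k-1}\lambda_jy_j$. Then for all $k\ge1$, $$-B_H\,\mathrm{dist}(\overline y_k,Q)\le\mathrm{Gap}(\overline y_k,H,Q)\le\frac{1}{k\eta_k}\Big(\frac{D_X^2}{2\underline\lambda}\Big)+\frac{\sum_{j=0}^{k-1}\delta_j\eta_j^{-1}}{k}\Big(\frac{1}{2\underline\lambda}\Big).$$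
   Context: Work in $\mathbb{R}^n$ with Euclidean inner product $\langle\cdot,\cdot\rangle$ and norm $\|\cdot\|$. The maps $F\colon \mathrm{Dom}\,F\to\mathbb{R}^n$ and $H\colon\mathrm{Dom}\,H\to\mathbb{R}^n$ are monotone and Lipschitz continuous with constants $L_F>0$ and $L_H>0$. $X$ is a nonempty compact convex set and $\Omega$ a nonempty closed convex set with $X\subset\Omega\subset\mathrm{Dom}\,F\cap\mathrm{Dom}\,H$; $P_X,P_\Omega$ denote orthogonal projections. $Q:=\{x\in X:\langle F(x),y-x\rangle\ge0\ \forall y\in X\}$ is assumed nonempty. $D_X:=\sup_{x,y\in X}\|x-y\|$, $B_H:=\sup_{x\in Q}\|H(x)\|$, $\mathrm{dist}(y,Q)$ is the Euclidean distance to $Q$. $\mathrm{Gap}(z,H,Q):=\sup_{x\in Q}\langle H(x),z-x\rangle$. IneIREG method: start with $x_0=x_{-1}\in X$; for $k=0,1,\dots$, with parameters $\alpha_k\ge0$, $\lambda_k>0$, $\eta_k>0$, set $w_k=x_k+\alpha_k(x_k-x_{k-1})$, $w'_k=P_\Omega(w_k)$, $y_k=P_X\big(w_k-\lambda_k(F(w'_k)+\eta_kH(w'_k))\big)$, $x_{k+1}=P_X\big(w_k-\lambda_k(F(y_k)+\eta_kH(y_k))\big)$. Also $\delta_k:=\alpha_k(1+\alpha_k)\|x_k-x_{k-1}\|^2$ for $k\ge0$. *)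

From HB Require Import structures.
From mathcomp Require Import all_boot all_order all_algebra.
From mathcomp Require Import all_classical all_reals all_analysis.
Set Implicit Arguments. Unset Strict Implicit. Unset Printing Implicit Defensive.
Import Order.TTheory GRing.Theory Num.Theory.
Local Open Scope classical_set_scope.
Local Open Scope ring_scope.

Section Defs.
Variables (R : realType) (n : nat).
Local Notation vec := 'rV[R]_n.

Definition dot (u v : vec) : R := \sum_(i < n) u ord0 i * v ord0 i.
Definition enorm (u : vec) : R := Num.sqrt (dot u u).

Definition vmonotone_on (D : set vec) (F : vec -> vec) :=
  forall x y, D x -> D y -> 0 <= dot (F x - F y) (x - y).
Definition vlipschitz_on (D : set vec) (L : R) (F : vec -> vec) :=
  forall x y, D x -> D y -> enorm (F x - F y) <= L * enorm (x - y).

Definition vconvex_set (A : set vec) :=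
  forall x y (t : R), A x -> A y -> 0 <= t <= 1 -> A (t *: x + (1 - t) *: y).

Definition is_orth_proj (A : set vec) (p : vec -> vec) :=
  forall z, A (p z) /\ forall y, A y -> enorm (z - p z) <= enorm (z - y).

Definition VIsol (F : vec -> vec) (X : set vec) : set vec :=
  [set x | X x /\ forall y, X y -> 0 <= dot (F x) (y - x)].

Definition vdiam (X : set vec) : R :=
  sup [set d | exists x y, X x /\ X y /\ d = enorm (x - y)].
Definition supnorm (H : vec -> vec) (Q : set vec) : R :=
  sup [set enorm (H x) | x in Q].
Definition distQ (y : vec) (Q : set vec) : R :=
  inf [set enorm (y - x) | x in Q].
Definition Gap (z : vec) (H : vec -> vec) (Q : set vec) : R :=
  sup [set dot (H x) (z - x) | x in Q].

(* x_{k-1}, with the convention x_{-1} = x_0 *)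
Definition xprev (x : nat -> vec) (k : nat) : vec :=
  match k with 0%N => x 0%N | k'.+1 => x k' end.

Definition delta (alpha : nat -> R) (x : nat -> vec) (k : nat) : R :=
  alpha k * (1 + alpha k) * enorm (x k - xprev x k) ^+ 2.

Definition noninc_seq (u : nat -> R) := forall k, u k.+1 <= u k.
End Defs.

From HB Require Import structures.
From mathcomp Require Import all_boot all_order all_algebra.
From mathcomp Require Import all_classical all_reals all_analysis.
From mathcomp Require Import ring lra.
Set Implicit Arguments. Unset Strict Implicit. Unset Printing Implicit Defensive.
Import Order.TTheory GRing.Theory Num.Theory.
Local Open Scope classical_set_scope.
Local Open Scope ring_scope.

(* Each IneIREG step is a projected extragradient step from the
   extrapolated point w_k: the two projection inequalities, Lipschitz continuity
   with lambda_k (L_F + eta_k L_H) <= 1, and monotonicity of F and H at the VI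
   solution q give
     ||x_{k+1} - q||^2 <= ||w_k - q||^2 - 2 lambda_k eta_k <H q, y_k - q>,
   where ||w_k - q||^2 = (1 + alpha_k) ||x_k - q||^2 - alpha_k ||x_{k-1} - q||^2
   + delta_k. After division by eta_k, the weights 1/eta_k (nondecreasing) and
   alpha_k/eta_k (nonincreasing) make the distance terms telescope to at most
   D_X^2/eta_k. Averaging with the weights lambda_j >= lam_lo bounds
   <H q, ybar_k - q> uniformly in q, hence the gap; the lower bound is
   Cauchy-Schwarz together with ||H q|| <= B_H. *)

Section Euclidean.
Variables (R : realType) (n : nat).
Local Notation vec := 'rV[R]_n.
Implicit Types (u v z : vec) (a : R).

Lemma dotC u v : dot u v = dot v u.
Proof. by apply: eq_bigr => i _; rewrite mulrC. Qed.

Lemma dotDl u v z : dot (u + v) z = dot u z + dot v z.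
Proof. by rewrite /dot -big_split; apply: eq_bigr => i _; rewrite !mxE mulrDl. Qed.

Lemma dotDr u v z : dot z (u + v) = dot z u + dot z v.
Proof. by rewrite dotC dotDl !(dotC z). Qed.

Lemma dotZl a u v : dot (a *: u) v = a * dot u v.
Proof. by rewrite /dot mulr_sumr; apply: eq_bigr => i _; rewrite !mxE mulrA. Qed.

Lemma dotZr a u v : dot u (a *: v) = a * dot u v.
Proof. by rewrite dotC dotZl dotC. Qed.

Lemma dotNl u v : dot (- u) v = - dot u v.
Proof. by rewrite -scaleN1r dotZl mulN1r. Qed.

Lemma dotNr u v : dot u (- v) = - dot u v.
Proof. by rewrite dotC dotNl dotC. Qed.

Lemma dotBl u v z : dot (u - v) z = dot u z - dot v z.
Proof. by rewrite dotDl dotNl. Qed.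

Lemma dot0l v : dot 0 v = 0.
Proof. by rewrite -(scale0r (0 : vec)) dotZl mul0r. Qed.

Lemma dot0r v : dot v 0 = 0.
Proof. by rewrite dotC dot0l. Qed.

Lemma dot_sumr (I : finType) (f : I -> vec) v :
  dot v (\sum_i f i) = \sum_i dot v (f i).
Proof. exact: (big_morph (dot v) (fun u z => dotDr u z v) (dot0r v)). Qed.

Lemma dotvvD u v : dot (u + v) (u + v) = dot u u + 2 * dot u v + dot v v.
Proof. by rewrite dotDl !dotDr (dotC v u); ring. Qed.

Lemma dotvvB u v : dot (u - v) (u - v) = dot u u - 2 * dot u v + dot v v.
Proof. by rewrite dotvvD dotNr dotNl dotNr opprK; ring. Qed.

Lemma dotvv_ge0 u : 0 <= dot u u.
Proof. by apply: sumr_ge0 => i _; rewrite -expr2 sqr_ge0. Qed.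

Lemma dotvv_eq0 u : dot u u = 0 -> u = 0.
Proof.
move=> /eqP; rewrite psumr_eq0 => [/allP uu0|i _]; last by rewrite -expr2 sqr_ge0.
apply/rowP => i; rewrite mxE; have := uu0 i (mem_index_enum _).
by rewrite /= -expr2 sqrf_eq0 => /eqP.
Qed.

Lemma enorm_ge0 u : 0 <= enorm u.
Proof. exact: sqrtr_ge0. Qed.

Lemma sqr_enorm u : enorm u ^+ 2 = dot u u.
Proof. by rewrite sqr_sqrtr // dotvv_ge0. Qed.

Lemma enormN u : enorm (- u) = enorm u.
Proof. by rewrite /enorm dotNl dotNr opprK. Qed.

Lemma ler_enorm u v : (enorm u <= enorm v) = (dot u u <= dot v v).
Proof. by rewrite ler_sqrt // dotvv_ge0. Qed.

Lemma enorm_gt0 u : u != 0 -> 0 < enorm u.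
Proof.
move=> u0; rewrite lt_def enorm_ge0 andbT; apply: contra u0 => /eqP u_eq0.
by apply/eqP/dotvv_eq0; rewrite -sqr_enorm u_eq0 expr0n.
Qed.

Lemma dot_le_enorm u v : dot u v <= enorm u * enorm v.
Proof.
have [->|u0] := eqVneq u 0; first by rewrite dot0l mulr_ge0 ?enorm_ge0.
have [->|v0] := eqVneq v 0; first by rewrite dot0r mulr_ge0 ?enorm_ge0.
have uv_gt0 : 0 < enorm u * enorm v by rewrite mulr_gt0 ?enorm_gt0.
have := dotvv_ge0 (enorm v *: u - enorm u *: v).
rewrite dotvvB !(dotZl, dotZr) -!sqr_enorm => h.
by rewrite -(ler_pM2l uv_gt0); lra.
Qed.

Lemma ler_enormD u v : enorm (u + v) <= enorm u + enorm v.
Proof.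
rewrite -(ler_pXn2r (isT : (0 < 2)%N)) ?nnegrE ?addr_ge0 ?enorm_ge0 //.
by rewrite sqr_enorm dotvvD sqrrD !sqr_enorm; have := dot_le_enorm u v; lra.
Qed.

Lemma orth_proj_variational (A : set vec) p z b :
  vconvex_set A -> is_orth_proj A p -> A b -> dot (z - p z) (b - p z) <= 0.
Proof.
move=> convA projA Ab; have [Apz p_min] := projA z.
have two_uv_le t : 0 < t <= 1 ->
    2 * dot (z - p z) (b - p z) <= t * dot (b - p z) (b - p z).
  move=> /andP[t_gt0 t_le1].
  have At : A (t *: b + (1 - t) *: p z) by apply: convA; rewrite // ltW.
  have := p_min _ At; rewrite ler_enorm.
  have -> : z - (t *: b + (1 - t) *: p z) = (z - p z) - t *: (b - p z).
    by apply/rowP => i; rewrite !mxE; ring.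
  by rewrite (dotvvB _ (t *: _)) !(dotZl, dotZr) => h; rewrite -(ler_pM2l t_gt0); lra.
rewrite leNgt; apply/negP => uv_gt0.
have vv_ge0 := dotvv_ge0 (b - p z).
set uv := dot _ _ in uv_gt0 two_uv_le; set vv := dot _ _ in vv_ge0 two_uv_le.
have s_gt0 : 0 < uv + vv by lra.
have t_in : 0 < uv / (uv + vv) <= 1.
  by rewrite divr_gt0 //= ler_pdivrMr // mul1r lerDl.
have := two_uv_le _ t_in; rewrite mulrAC ler_pdivlMr //.
by have := mulr_gt0 uv_gt0 uv_gt0; have := mulr_ge0 (ltW uv_gt0) vv_ge0; lra.
Qed.

Lemma orth_proj_enorm_le (A : set vec) p z b :
  vconvex_set A -> is_orth_proj A p -> A b -> enorm (p z - b) <= enorm (z - b).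
Proof.
move=> convA projA Ab; have := orth_proj_variational z convA projA Ab.
have -> : z - b = (z - p z) + (p z - b) by rewrite addrA subrK.
have -> : dot (z - p z) (b - p z) = - dot (z - p z) (p z - b) by rewrite -dotNr opprB.
by rewrite ler_enorm (dotvvD (z - p z)); have := dotvv_ge0 (z - p z); lra.
Qed.

Lemma dot_extrapolation u v q a :
  dot (u + a *: (u - v) - q) (u + a *: (u - v) - q) =
  (1 + a) * dot (u - q) (u - q) - a * dot (v - q) (v - q)
  + a * (1 + a) * dot (u - v) (u - v).
Proof.
have -> : u + a *: (u - v) - q = (1 + a) *: (u - q) - a *: (v - q).
  by apply/rowP => i; rewrite !mxE; ring.
have -> : u - v = (u - q) - (v - q) by apply/rowP => i; rewrite !mxE; ring.
by rewrite (dotvvB ((1 + a) *: _)) (dotvvB (u - q) (v - q)) !(dotZl, dotZr); ring.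
Qed.


Lemma lipschitz_cross_le (F H : vec -> vec) (LF LH lam eta : R) (w w' y v : vec) :
  0 <= LF -> 0 <= LH -> 0 < lam -> 0 < eta -> lam * (LF + eta * LH) <= 1 ->
  enorm (w' - y) <= enorm (w - y) ->
  enorm (F w' - F y) <= LF * enorm (w' - y) ->
  enorm (H w' - H y) <= LH * enorm (w' - y) ->
  2 * lam * dot (F w' + eta *: H w' - (F y + eta *: H y)) v
    <= dot (w - y) (w - y) + dot v v.
Proof.
move=> LF_ge0 LH_ge0 lam_gt0 eta_gt0 step w'_closer lipF lipH.
have ev_ge0 := enorm_ge0 v.
have dotF : dot (F w' - F y) v <= LF * enorm (w' - y) * enorm v.
  exact: le_trans (dot_le_enorm _ _) (ler_wpM2r ev_ge0 lipF).
have dotH : dot (H w' - H y) v <= LH * enorm (w' - y) * enorm v.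
  exact: le_trans (dot_le_enorm _ _) (ler_wpM2r ev_ge0 lipH).
have -> : F w' + eta *: H w' - (F y + eta *: H y) = F w' - F y + eta *: (H w' - H y).
  by rewrite scalerBr opprD addrACA.
have lam_dot : lam * (dot (F w' - F y) v + eta * dot (H w' - H y) v)
    <= enorm (w' - y) * enorm v.
  apply: le_trans (_ : lam * (LF + eta * LH) * (enorm (w' - y) * enorm v) <= _).
    rewrite -mulrA; apply: ler_wpM2l; first exact: ltW.
    by have := ler_wpM2l (ltW eta_gt0) dotH; lra.
  by rewrite ler_piMl ?mulr_ge0 ?enorm_ge0.
have amgm : 2 * (enorm (w - y) * enorm v) <= enorm (w - y) ^+ 2 + enorm v ^+ 2.
  by have := sqr_ge0 (enorm (w - y) - enorm v); rewrite sqrrB; lra.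
have := ler_wpM2r ev_ge0 w'_closer.
by rewrite dotDl dotZl -!sqr_enorm; lra.
Qed.

Lemma extragradient_descent (F H : vec -> vec) (LF LH lam eta : R) (w w' y xp q : vec) :
  0 <= LF -> 0 <= LH -> 0 < lam -> 0 < eta -> lam * (LF + eta * LH) <= 1 ->
  dot (w - lam *: (F w' + eta *: H w') - y) (xp - y) <= 0 ->
  dot (w - lam *: (F y + eta *: H y) - xp) (q - xp) <= 0 ->
  enorm (w' - y) <= enorm (w - y) ->
  enorm (F w' - F y) <= LF * enorm (w' - y) ->
  enorm (H w' - H y) <= LH * enorm (w' - y) ->
  0 <= dot (F y - F q) (y - q) -> 0 <= dot (H y - H q) (y - q) ->
  0 <= dot (F q) (y - q) ->
  dot (xp - q) (xp - q) <= dot (w - q) (w - q) - 2 * lam * eta * dot (H q) (y - q).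
Proof.
move=> LF_ge0 LH_ge0 lam_gt0 eta_gt0 step proj_y proj_xp w'_closer lipF lipH monF monH sol_q.
have cross := lipschitz_cross_le (xp - y) LF_ge0 LH_ge0 lam_gt0 eta_gt0 step w'_closer lipF lipH.
set gw := F w' + eta *: H w' in proj_y cross.
set gy := F y + eta *: H y in proj_xp cross.
rewrite (dotBl gw) in cross.
have {}proj_y : dot (w - y) (xp - y) <= lam * dot gw (xp - y).
  by move: proj_y; rewrite addrAC (dotBl (w - y)) dotZl subr_le0.
have {}proj_xp : lam * dot gy (xp - q) <= dot (w - xp) (xp - q).
  move: proj_xp; rewrite addrAC -[q - xp]opprB dotNr (dotBl (w - xp)) dotZl.
  by rewrite oppr_le0 subr_ge0.
have mono : eta * dot (H q) (y - q) <= dot gy (y - q).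
  rewrite /gy dotDl dotZl; move: monF monH; rewrite !dotBl => mF mH.
  by have := mulr_ge0 (ltW eta_gt0) mH; lra.
have split_wq : dot (w - q) (w - q)
    = dot (w - xp) (w - xp) + 2 * dot (w - xp) (xp - q) + dot (xp - q) (xp - q).
  by rewrite -dotvvD addrA subrK.
have split_wxp : dot (w - xp) (w - xp)
    = dot (w - y) (w - y) - 2 * dot (w - y) (xp - y) + dot (xp - y) (xp - y).
  by rewrite -dotvvB opprB addrA subrK.
have split_gy : dot gy (xp - q) = dot gy (xp - y) + dot gy (y - q).
  by rewrite -dotDr addrA subrK.
rewrite split_gy in proj_xp.
by have := ler_wpM2l (ltW lam_gt0) mono; lra.
Qed.


Lemma dot_wavgBr (I : finType) (c : I -> R) (f : I -> vec) v q :
  \sum_i c i != 0 ->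
  dot v ((\sum_i c i)^-1 *: \sum_i c i *: f i - q)
    = (\sum_i c i)^-1 * \sum_i c i * dot v (f i - q).
Proof.
move=> c_neq0.
have -> : (\sum_i c i)^-1 *: \sum_i c i *: f i - q
    = (\sum_i c i)^-1 *: \sum_i c i *: (f i - q).
  have -> : \sum_i c i *: (f i - q) = \sum_i c i *: f i - (\sum_i c i) *: q.
    by rewrite scaler_suml -sumrB; apply: eq_bigr => i _; rewrite scalerBr.
  by rewrite scalerBr scalerA mulVf // scale1r.
by rewrite dotZr dot_sumr; congr (_ * _); apply: eq_bigr => i _; rewrite dotZr.
Qed.

Lemma normr_rV_entry (v : vec) i : `|v ord0 i| <= `|v|.
Proof.
by rewrite [leRHS]/Num.Def.normr /= mx_normrE; apply/bigmax_geP; right; exists (ord0, i).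
Qed.

Lemma enorm_le_normr (v : vec) : enorm v <= Num.sqrt n%:R * `|v|.
Proof.
have -> : Num.sqrt n%:R * `|v| = Num.sqrt (\sum_(i < n) `|v| ^+ 2).
  by rewrite sumr_const card_ord -(mulr_natl (`|v| ^+ 2)) sqrtrM ?ler0n // sqrtr_sqr normr_id.
apply: ler_wsqrtr; apply: ler_sum => i _.
rewrite -expr2 -real_normK ?num_real // lerXn2r ?nnegrE //; exact: normr_rV_entry.
Qed.

Lemma compact_enorm_bounded (X : set vec) :
  @compact (vec : normedModType R) X -> exists B, forall u v, X u -> X v -> enorm (u - v) <= B.
Proof.
move=> /compact_bounded[M [_ XM]].
have X_le u : X u -> `|u| <= M + 1 by apply: XM; rewrite ltrDl.
exists (Num.sqrt n%:R * (2 * (M + 1))) => u v Xu Xv.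
apply: le_trans (enorm_le_normr _) _; apply: ler_wpM2l; first exact: sqrtr_ge0.
by apply: le_trans (ler_normB u v) _; have := X_le _ Xu; have := X_le _ Xv; lra.
Qed.

Lemma enorm_le_vdiam (X : set vec) :
  X !=set0 -> @compact (vec : normedModType R) X ->
  forall u v, X u -> X v -> enorm (u - v) <= vdiam X.
Proof.
move=> [u0 Xu0] /compact_enorm_bounded[B X_bdd] u v Xu Xv.
apply: sup_upper_bound; last by exists u, v.
split; first by exists (enorm (u0 - u0)), u0, u0.
by exists B => _ [u' [v' [Xu' [Xv' ->]]]]; exact: X_bdd.
Qed.

Lemma lipschitz_bounded_on (D A : set vec) (L B : R) (H : vec -> vec) q0 :
  0 <= L -> vlipschitz_on D L H -> A `<=` D -> A q0 ->
  (forall u v, A u -> A v -> enorm (u - v) <= B) ->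
  forall q, A q -> enorm (H q) <= enorm (H q0) + L * B.
Proof.
move=> L_ge0 lipH AD Aq0 A_bdd q Aq.
have -> : H q = H q0 + (H q - H q0) by rewrite addrC subrK.
apply: le_trans (ler_enormD _ _) _; rewrite lerD2l.
apply: le_trans (lipH _ _ (AD _ Aq) (AD _ Aq0)) _.
by rewrite ler_wpM2l // A_bdd.
Qed.

Lemma Gap_le_ub (H : vec -> vec) (Q : set vec) z b :
  Q !=set0 -> (forall q, Q q -> dot (H q) (z - q) <= b) -> Gap z H Q <= b.
Proof.
move=> [q Qq] ub; apply: ge_sup => [|_ [p Qp <-]]; last exact: ub.
by exists (dot (H q) (z - q)), q.
Qed.

Lemma Gap_ge_supnorm_distQ (H : vec -> vec) (Q : set vec) z M b :
  Q !=set0 -> (forall q, Q q -> enorm (H q) <= M) ->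
  (forall q, Q q -> dot (H q) (z - q) <= b) ->
  - supnorm H Q * distQ z Q <= Gap z H Q.
Proof.
move=> [q0 Qq0] H_bdd ub.
have le_Gap q : Q q -> dot (H q) (z - q) <= Gap z H Q.
  move=> Qq; apply: sup_upper_bound; last by exists q.
  split; first by exists (dot (H q0) (z - q0)), q0.
  by exists b => _ [p Qp <-]; exact: ub.
have le_supnorm q : Q q -> enorm (H q) <= supnorm H Q.
  move=> Qq; apply: sup_upper_bound; last by exists q.
  split; first by exists (enorm (H q0)), q0.
  by exists M => _ [p Qp <-]; exact: H_bdd.
have Gap_ge q : Q q -> - (supnorm H Q * enorm (z - q)) <= Gap z H Q.
  move=> Qq; apply: le_trans (le_Gap _ Qq).
  have := dot_le_enorm (- H q) (z - q); rewrite dotNl enormN.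
  by have := ler_wpM2r (enorm_ge0 (z - q)) (le_supnorm _ Qq); lra.
have := le_trans (enorm_ge0 _) (le_supnorm _ Qq0); rewrite le_eqVlt.
case/orP => [/eqP S0 | S_gt0].
  by have := Gap_ge _ Qq0; rewrite -S0 !(mul0r, oppr0).
have : - Gap z H Q / supnorm H Q <= distQ z Q.
  apply: lb_le_inf; first by exists (enorm (z - q0)), q0.
  move=> _ [q Qq <-]; rewrite ler_pdivrMr // mulrC.
  by have := Gap_ge _ Qq; lra.
by rewrite ler_pdivrMr //; lra.
Qed.

Lemma delta_ge0 (alpha : nat -> R) (x : nat -> vec) k :
  0 <= alpha k -> 0 <= delta alpha x k.
Proof.
move=> alpha_ge0; rewrite /delta; apply: mulr_ge0; last exact: sqr_ge0.
by rewrite mulr_ge0 ?addr_ge0.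
Qed.

End Euclidean.

Lemma noninc_seq_le (R : realType) (u : nat -> R) m k :
  noninc_seq u -> (m <= k)%N -> u k <= u m.
Proof.
move=> u_noninc /subnK <-; elim: (k - m)%N => [|d IH]; first by rewrite add0n.
by rewrite addSn; exact: le_trans (u_noninc _) IH.
Qed.

Lemma step_size_le (R : realFieldType) (LF LH lam lam_hi eta eta0 : R) :
  0 < LF -> 0 < LH -> 0 <= eta -> eta <= eta0 -> 0 <= lam -> lam <= lam_hi ->
  lam_hi <= 1 / (LF + eta0 * LH) -> lam * (LF + eta * LH) <= 1.
Proof.
move=> LF_gt0 LH_gt0 eta_ge0 eta_le lam_ge0 lam_le.
have L_gt0 : 0 < LF + eta0 * LH.
  by have := mulr_ge0 (le_trans eta_ge0 eta_le) (ltW LH_gt0); lra.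
rewrite ler_pdivlMr // => hi_le; apply: le_trans hi_le.
apply: ler_pM => //; first by rewrite addr_ge0 ?mulr_ge0 // ltW.
by rewrite lerD2l ler_wpM2r // ltW.
Qed.

(* [j.-1] truncates at 0, so the instance [j = 0] of the step inequality uses
   phi_{-1} = phi_0, as x_{-1} = x_0 does. *)
Lemma inertial_sum_le (R : realType) (eta al c dl phi : nat -> R) (D2 : R) :
  (forall j, 0 < eta j) -> noninc_seq eta -> noninc_seq (fun j => al j / eta j) ->
  al 0%N <= 1 -> (forall j, 0 <= al j) -> (forall j, 0 <= phi j <= D2) ->
  (forall j, eta j * c j <= (1 + al j) * phi j - al j * phi j.-1 + dl j - phi j.+1) ->
  forall k, \sum_(j < k) c j <= D2 / eta k + \sum_(j < k) dl j / eta j.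
Proof.
move=> eta_gt0 eta_noninc b_noninc al0_le1 al_ge0 phi_bd step.
have a_gt0 j : 0 < (eta j)^-1 by rewrite invr_gt0.
have a_le j : (eta j)^-1 <= (eta j.+1)^-1 by rewrite lef_pV2 ?posrE.
have D2_ge0 : 0 <= D2 by have /andP[] := phi_bd 0%N; exact: le_trans.
have c_le j : c j - dl j / eta j
    <= (eta j)^-1 * ((1 + al j) * phi j - al j * phi j.-1 - phi j.+1).
  have := ler_wpM2l (ltW (a_gt0 j)) (step j); rewrite mulKf ?lt0r_neq0 //; lra.
have lyapunov m : \sum_(j < m.+1) (c j - dl j / eta j)
    <= (eta m)^-1 * (D2 - phi m.+1) + al m / eta m * (phi m - D2).
  elim: m => [|m IH].
    rewrite big_ord1; have /andP[_ phi0_le] := phi_bd 0%N.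
    have : 0 <= (1 - al 0%N) * (eta 0%N)^-1 * (D2 - phi 0%N).
      by rewrite !mulr_ge0 ?subr_ge0 // ltW.
    by have /= := c_le 0%N; lra.
  rewrite big_ord_recr /=.
  have /andP[_ phi_le] := phi_bd m; have /andP[_ phi_le'] := phi_bd m.+1.
  have : 0 <= ((eta m.+1)^-1 - (eta m)^-1) * (D2 - phi m.+1).
    by rewrite mulr_ge0 ?subr_ge0.
  have : 0 <= (al m / eta m - al m.+1 / eta m.+1) * (D2 - phi m).
    by rewrite mulr_ge0 ?subr_ge0 //; exact: b_noninc.
  by have /= := c_le m.+1; lra.
case=> [|k]; first by rewrite !big_ord0 addr0 divr_ge0 // ltW.
have := lyapunov k; rewrite sumrB.
have /andP[_ phi_le] := phi_bd k; have /andP[phi_ge0' _] := phi_bd k.+1.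
have : 0 <= al k / eta k * (D2 - phi k) by rewrite mulr_ge0 ?subr_ge0 ?divr_ge0 // ltW.
have : 0 <= (eta k)^-1 * phi k.+1 by rewrite mulr_ge0 // ltW.
have : (eta k)^-1 * D2 <= (eta k.+1)^-1 * D2 by rewrite ler_wpM2r.
lra.
Qed.

Section IneIREG.
Variables (R : realType) (n : nat).
Local Notation vec := 'rV[R]_n.
Variables (F H : vec -> vec) (DomF DomH : set vec) (LF LH : R).
Variables (X Omega : set vec) (PX POm : vec -> vec).
Variables (alpha lambda eta : nat -> R) (lam_lo : R) (x w w' y : nat -> vec).
Hypotheses (LF_gt0 : 0 < LF) (LH_gt0 : 0 < LH).
Hypotheses (monF : vmonotone_on DomF F) (lipF : vlipschitz_on DomF LF F).
Hypotheses (monH : vmonotone_on DomH H) (lipH : vlipschitz_on DomH LH H).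
Hypotheses (convX : vconvex_set X) (convOmega : vconvex_set Omega).
Hypotheses (X_sub : X `<=` Omega) (Omega_sub : Omega `<=` DomF `&` DomH).
Hypotheses (projX : is_orth_proj X PX) (projOmega : is_orth_proj Omega POm).
Hypothesis x0_in : X (x 0%N).
Hypotheses (alpha_ge0 : forall k, 0 <= alpha k) (lambda_gt0 : forall k, 0 < lambda k).
Hypothesis eta_gt0 : forall k, 0 < eta k.
Hypothesis w_def : forall k, w k = x k + alpha k *: (x k - xprev x k).
Hypothesis w'_def : forall k, w' k = POm (w k).
Hypothesis y_def : forall k, y k = PX (w k - lambda k *: (F (w' k) + eta k *: H (w' k))).
Hypothesis x_def : forall k, x k.+1 = PX (w k - lambda k *: (F (y k) + eta k *: H (y k))).
Hypotheses (eta_noninc : noninc_seq eta) (alpha0_le1 : alpha 0%N <= 1).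
Hypothesis alpha_eta_noninc : noninc_seq (fun k => alpha k / eta k).
Hypothesis step_size : forall k, lambda k * (LF + eta k * LH) <= 1.
Hypotheses (lam_lo_gt0 : 0 < lam_lo) (lambda_ge : forall k, lam_lo <= lambda k).

Lemma xprevE k : xprev x k = x k.-1.
Proof. by case: k. Qed.

Lemma ireg_iterates_in_X k : X (x k) /\ X (y k).
Proof.
by split; [case: k => [//|k]; rewrite x_def | rewrite y_def]; exact: (projX _).1.
Qed.

Lemma ireg_descent k q : VIsol F X q ->
  eta k * (2 * (lambda k * dot (H q) (y k - q)))
    <= (1 + alpha k) * dot (x k - q) (x k - q)
       - alpha k * dot (x k.-1 - q) (x k.-1 - q)
       + delta alpha x k - dot (x k.+1 - q) (x k.+1 - q).
Proof.
move=> [Xq sol_q]; have [_ Xy] := ireg_iterates_in_X k.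
have [DFq DHq] := Omega_sub (X_sub Xq).
have [DFy DHy] := Omega_sub (X_sub Xy).
have [DFw' DHw'] : (DomF `&` DomH) (w' k).
  by apply: Omega_sub; rewrite w'_def; exact: (projOmega _).1.
have proj_y : dot (w k - lambda k *: (F (w' k) + eta k *: H (w' k)) - y k)
    (x k.+1 - y k) <= 0.
  by rewrite y_def; exact: orth_proj_variational convX projX (ireg_iterates_in_X k.+1).1.
have proj_x : dot (w k - lambda k *: (F (y k) + eta k *: H (y k)) - x k.+1)
    (q - x k.+1) <= 0.
  by rewrite x_def; exact: orth_proj_variational convX projX Xq.
have w'_closer : enorm (w' k - y k) <= enorm (w k - y k).
  by rewrite w'_def; exact: orth_proj_enorm_le convOmega projOmega (X_sub Xy).
have := extragradient_descent (ltW LF_gt0) (ltW LH_gt0) (lambda_gt0 k) (eta_gt0 k)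
  (step_size k) proj_y proj_x w'_closer (lipF DFw' DFy) (lipH DHw' DHy)
  (monF DFy DFq) (monH DHy DHq) (sol_q _ Xy).
by rewrite w_def dot_extrapolation /delta sqr_enorm xprevE; lra.
Qed.

Lemma ireg_weighted_gap_le k q D : VIsol F X q ->
  (forall u v, X u -> X v -> enorm (u - v) <= D) ->
  2 * \sum_(j < k) lambda j * dot (H q) (y j - q)
    <= D ^+ 2 / eta k + \sum_(j < k) delta alpha x j / eta j.
Proof.
move=> Qq X_bdd; rewrite mulr_sumr.
have := @inertial_sum_le _ eta alpha
  (fun j => 2 * (lambda j * dot (H q) (y j - q))) (delta alpha x)
  (fun j => dot (x j - q) (x j - q)) (D ^+ 2)
  eta_gt0 eta_noninc alpha_eta_noninc alpha0_le1 alpha_ge0.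
apply=> // j; last exact: ireg_descent.
have := X_bdd _ _ (ireg_iterates_in_X j).1 Qq.1.
rewrite dotvv_ge0 /= -sqr_enorm !expr2 => e_le.
by apply: ler_pM; rewrite ?enorm_ge0.
Qed.

Lemma ireg_avg_gap_le k q D : (0 < k)%N -> VIsol F X q ->
  (forall u v, X u -> X v -> enorm (u - v) <= D) ->
  dot (H q) ((\sum_(j < k) lambda j)^-1 *: \sum_(j < k) lambda j *: y j - q)
    <= (k%:R * eta k)^-1 * (D ^+ 2 / (2 * lam_lo))
       + (\sum_(j < k) delta alpha x j / eta j) / k%:R * (1 / (2 * lam_lo)).
Proof.
move=> k_gt0 Qq X_bdd; have := ireg_weighted_gap_le k Qq X_bdd.
set L := \sum_(j < k) lambda j; set T := \sum_(j < k) delta alpha x j / eta j.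
have kR_gt0 : 0 < k%:R :> R by rewrite ltr0n.
have L_ge : k%:R * lam_lo <= L.
  by rewrite mulr_natl -[X in _ *+ X](card_ord k) -sumr_const; apply: ler_sum.
have L_gt0 : 0 < L by apply: lt_le_trans L_ge; rewrite mulr_gt0.
have D_ge0 : 0 <= D := le_trans (enorm_ge0 _) (X_bdd _ _ x0_in x0_in).
have T_ge0 : 0 <= T.
  by apply: sumr_ge0 => j _; rewrite divr_ge0 ?delta_ge0 // ltW.
have B_ge0 : 0 <= (D ^+ 2 / eta k + T) / 2.
  by rewrite divr_ge0 // addr_ge0 // divr_ge0 ?sqr_ge0 // ltW.
rewrite dot_wavgBr ?lt0r_neq0 // => S_le.
have -> : (k%:R * eta k)^-1 * (D ^+ 2 / (2 * lam_lo)) + T / k%:R * (1 / (2 * lam_lo))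
    = (k%:R * lam_lo)^-1 * ((D ^+ 2 / eta k + T) / 2).
  by field; rewrite !lt0r_neq0.
apply: le_trans (_ : L^-1 * ((D ^+ 2 / eta k + T) / 2) <= _).
  by apply: ler_wpM2l; [rewrite invr_ge0 ltW | lra].
by apply: ler_wpM2r => //; rewrite lef_pV2 ?posrE // mulr_gt0.
Qed.

End IneIREG.

Theorem proposition3p3 (R : realType) (n : nat)
  (F H : 'rV[R]_n -> 'rV[R]_n) (DomF DomH : set 'rV[R]_n) (LF LH : R)
  (X Omega : set 'rV[R]_n) (PX POm : 'rV[R]_n -> 'rV[R]_n)
  (alpha lambda eta : nat -> R) (lam_lo lam_hi : R)
  (x w w' y : nat -> 'rV[R]_n) :
  0 < LF -> 0 < LH ->
  vmonotone_on DomF F -> vlipschitz_on DomF LF F ->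
  vmonotone_on DomH H -> vlipschitz_on DomH LH H ->
  X !=set0 -> @compact ('rV[R]_n : normedModType R) X -> vconvex_set X ->
  Omega !=set0 -> @closed ('rV[R]_n : normedModType R) Omega -> vconvex_set Omega ->
  X `<=` Omega -> Omega `<=` DomF `&` DomH ->
  is_orth_proj X PX -> is_orth_proj Omega POm ->
  VIsol F X !=set0 ->
  (* IneIREG iteration, with x_{-1} = x_0 *)
  X (x 0%N) ->
  (forall k, 0 <= alpha k) -> (forall k, 0 < lambda k) -> (forall k, 0 < eta k) ->
  (forall k, w k = x k + alpha k *: (x k - xprev x k)) ->
  (forall k, w' k = POm (w k)) ->
  (forall k, y k = PX (w k - lambda k *: (F (w' k) + eta k *: H (w' k)))) ->
  (forall k, x k.+1 = PX (w k - lambda k *: (F (y k) + eta k *: H (y k)))) ->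
  (* assumptions of the proposition *)
  noninc_seq eta ->
  0 <= alpha 0%N <= 1 ->
  noninc_seq (fun k => alpha k / eta k) ->
  0 < lam_lo -> lam_lo <= lam_hi -> lam_hi <= 1 / (LF + eta 0%N * LH) ->
  (forall k, lam_lo <= lambda k <= lam_hi) ->
  (\sum_(0 <= k <oo) ((delta alpha x k / eta k)%:E) < +oo)%E ->
  forall k : nat, (1 <= k)%N ->
    let Q := VIsol F X in
    let Lam := \sum_(j < k) lambda j in
    let ybar := Lam^-1 *: \sum_(j < k) lambda j *: y j in
    - supnorm H Q * distQ ybar Q <= Gap ybar H Q /\
    Gap ybar H Q <=
      (k%:R * eta k)^-1 * (vdiam X ^+ 2 / (2 * lam_lo))
      + (\sum_(j < k) delta alpha x j / eta j) / k%:R * (1 / (2 * lam_lo)).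
Proof.
move=> LF_gt0 LH_gt0 monF lipF monH lipH Xne cX convX _ _ convOmega X_sub Omega_sub
  projX projOmega Qne x0_in alpha_ge0 lambda_gt0 eta_gt0 w_def w'_def y_def x_def
  eta_noninc /andP[_ alpha0_le1] alpha_eta_noninc lam_lo_gt0 _ lam_hi_le lambda_in
  _ k k_gt0 Q Lam ybar.
(* The summability of delta_k / eta_k only matters as k -> oo. *)
have X_bdd := enorm_le_vdiam Xne cX.
have lambda_ge j : lam_lo <= lambda j by have /andP[] := lambda_in j.
have step_size j : lambda j * (LF + eta j * LH) <= 1.
  have /andP[_ lambda_le] := lambda_in j.
  apply: step_size_le LF_gt0 LH_gt0 (ltW (eta_gt0 j)) _ (ltW (lambda_gt0 j)) lambda_le lam_hi_le.
  exact: noninc_seq_le eta_noninc (leq0n j).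
have gap_ub q (Qq : Q q) := ireg_avg_gap_le LF_gt0 LH_gt0 monF lipF monH lipH
  convX convOmega X_sub Omega_sub projX projOmega x0_in alpha_ge0 lambda_gt0 eta_gt0
  w_def w'_def y_def x_def eta_noninc alpha0_le1 alpha_eta_noninc step_size
  lam_lo_gt0 lambda_ge k_gt0 Qq X_bdd.
split; last exact: Gap_le_ub Qne gap_ub.
have [q0 Qq0] := Qne.
apply: (Gap_ge_supnorm_distQ Qne _ gap_ub).
apply: (lipschitz_bounded_on (ltW LH_gt0) lipH _ Qq0) => [q [Xq _] | u v [Xu _] [Xv _]].
  by case: (Omega_sub _ (X_sub _ Xq)).
exact: X_bdd.
Qed.
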